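(* Assume Dickson's conjecture. Then the set \[ \left\{ \frac{\varphi(p+1)}{\varphi(p)} \,:\, p \text{ and } p+2 \text{ are both prime} \right\} \] is dense in $\left[0,\tfrac{1}{3}\right]$.
   Context: $\varphi$ denotes Euler's totient function. Dickson's conjecture is the following assertion: if $f_1,\dots,f_k \in \mathbb{Z}[t]$ are linear polynomials with positive leading coefficients and the product $f=f_1f_2\cdots f_k$ does not vanish identically modulo any prime (i.e., for every prime $q$ there is an integer $t$ with $q \nmid f(t)$), then there are infinitely many positive integers $t$ for which $f_1(t),\dots,f_k(t)$ are simultaneously prime. *)

From HB Require Import structures.
From mathcomp Require Import all_boot all_order all_algebra.
From mathcomp Require Import reals.
Set Implicit Arguments. Unset Strict Implicit. Unset Printing Implicit Defensive.
Import Order.TTheory GRing.Theory Num.Theory.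

Local Open Scope ring_scope.

Definition int_prime (z : int) : bool := (0 < z) && prime `|z|%N.

(* A linear polynomial a*t + b in Z[t] is encoded by the pair (a, b). *)
Definition lin_eval (ab : int * int) (t : int) : int := ab.1 * t + ab.2.

Definition dickson_conjecture : Prop :=
  forall s : seq (int * int),
    all (fun ab => 0 < ab.1) s ->
    (forall q : nat, prime q ->
       exists t : int, ~~ (q%:Z %| \prod_(ab <- s) lin_eval ab t)%Z) ->
    forall N : nat, exists t : nat,
      (N < t)%N /\ all (fun ab => int_prime (lin_eval ab t%:Z)) s.

Definition totient_ratio (R : realType) (p : nat) : R :=
  (totient p.+1)%:R / (totient p)%:R.

From HB Require Import structures.
From mathcomp Require Import all_boot all_order all_algebra.
From mathcomp Require Import reals.
From mathcomp Require Import cyclic.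
From mathcomp Require Import ring lra zify.
Set Implicit Arguments. Unset Strict Implicit. Unset Printing Implicit Defensive.
Import Order.TTheory GRing.Theory Num.Theory.
Local Open Scope ring_scope.

(* If t, M t - 1 and M t + 1 are prime and t does not divide M, then
   phi(M t) / phi(M t - 1) = (phi(M) / M) * M (t - 1) / (M t - 2), which lies within
   1/t of phi(M) / M = prod_(p | M) (1 - 1/p).  When 6 divides M, the forms M t - 1,
   M t + 1, t have no fixed prime divisor, so Dickson's conjecture supplies such t
   as large as we like.  For M = 2 * 3 * prod_(K <= p < j) p the limit is
   (1/3) prod_(K <= p < j) (1 - 1/p); as j grows these products decrease in steps of
   size at most 1/K and tend to 0, so they come close to every point of [0, 1/3].
   They tend to 0 because for n = k! the numbers n (n / m), 0 < m <= k, are distinct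
   divisors of n^2 with totient phi(n) n / m, whence (phi(n) / n) sum_(m <= k) 1/m <= 1,
   while the harmonic sum diverges. *)

Section EulerProduct.
Variable R : realFieldType.

Definition euler_prod (s : seq nat) : R := \prod_(p <- s) (1 - p%:R^-1).

Lemma euler_prod_cat s1 s2 : euler_prod (s1 ++ s2) = euler_prod s1 * euler_prod s2.
Proof. exact: big_cat. Qed.

Lemma perm_euler_prod s1 s2 : perm_eq s1 s2 -> euler_prod s1 = euler_prod s2.
Proof. exact: perm_big. Qed.

Lemma euler_prod_gt0 s : all prime s -> 0 < euler_prod s.
Proof.
move=> /allP s_pr; rewrite /euler_prod big_seq.
apply: prodr_gt0 => p /s_pr/prime_gt1 p_gt1.
by rewrite subr_gt0 invf_lt1 ?ltr1n // ltr0n ltnW.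
Qed.

Lemma euler_prod_le1 s : all prime s -> euler_prod s <= 1.
Proof.
move=> /allP s_pr; rewrite /euler_prod big_seq.
apply: prodr_ile1 => p /s_pr/prime_gt0 p_gt0.
by rewrite subr_ge0 invf_le1 ?ltr0n // ler1n p_gt0 gerBl invr_ge0 ler0n.
Qed.

Lemma totient_euler_prod n : (0 < n)%N ->
  (totient n)%:R / n%:R = euler_prod (primes n).
Proof.
move=> n_gt0; have n_eq : n = (\prod_(p <- primes n) p ^ logn p n)%N.
  by rewrite {1}(prod_prime_decomp n_gt0) prime_decompE big_map.
rewrite totientE // [n in _ / n%:R]n_eq !natr_prod -prodf_div /euler_prod !big_seq.
apply: eq_bigr => p p_in.
have p_pr : prime p by move: p_in; rewrite mem_primes => /andP[].
have e_gt0 : (0 < logn p n)%N by rewrite logn_gt0.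
have p_neq0 : p%:R != 0 :> R by rewrite pnatr_eq0 -lt0n prime_gt0.
rewrite -(prednK e_gt0) expnS natrM natrM -subn1 natrB ?prime_gt0 //.
by field; rewrite p_neq0 /= pnatr_eq0 -lt0n expn_gt0 prime_gt0.
Qed.

End EulerProduct.

Lemma perm_primes_prod s : uniq s -> all prime s ->
  perm_eq (primes (\prod_(p <- s) p)) s.
Proof.
move=> s_uniq /allP s_pr; apply: uniq_perm; rewrite ?primes_uniq // => q.
have prod_gt0 : (0 < \prod_(p <- s) p)%N.
  by rewrite big_seq prodn_cond_gt0 // => p /s_pr/prime_gt0.
rewrite mem_primes prod_gt0 /=; apply/andP/idP => [[q_pr]|q_in].
  rewrite Euclid_dvd_prod // big_has => /hasP[p p_in].
  by rewrite /= (dvdn_prime2 q_pr (s_pr p p_in)) => /eqP->.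
split; first exact: s_pr.
by rewrite Euclid_dvd_prod ?s_pr // big_has; apply/hasP; exists q.
Qed.

Lemma totient_mul_dvdn n d : (d %| n)%N -> totient (n * d) = (totient n * d)%N.
Proof.
have [->|n_gt0 d_dvd] := posnP n; first by rewrite mul0n.
have d_gt0 : (0 < d)%N by apply: dvdn_gt0 d_dvd.
have nd_gt0 : (0 < n * d)%N by rewrite muln_gt0 n_gt0.
have same_primes : primes (n * d) = primes n.
  apply/eq_primes => p; rewrite primesM // orb_idr // !mem_primes n_gt0 d_gt0.
  by case/and3P=> -> _ /dvdn_trans->.
have nat_neq0 m : (0 < m)%N -> m%:R != 0 :> rat by rewrite pnatr_eq0 -lt0n.
have := totient_euler_prod rat nd_gt0.
rewrite same_primes -(totient_euler_prod rat n_gt0) natrM => /eqP.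
rewrite eqr_div ?mulf_neq0 ?nat_neq0 // => /eqP tot_eq.
apply/eqP; rewrite -(eqr_nat rat) natrM; apply/eqP/(mulIf (nat_neq0 n n_gt0)).
by rewrite tot_eq; ring.
Qed.

Definition harmonic (R : numFieldType) n : R := \sum_(0 <= m < n) m.+1%:R^-1.

Lemma harmonic_pow2_ge (R : realFieldType) j : j%:R / 2 <= harmonic R (2 ^ j).
Proof.
elim: j => [|j IH]; first by rewrite mul0r /harmonic big_nat1 invr1 ler01.
rewrite /harmonic (@big_cat_nat _ _ _ (2 ^ j)) ?leq_exp2l //= -/(harmonic R _).
have block : (2 ^ j.+1)%:R^-1 *+ (2 ^ j.+1 - 2 ^ j)
             <= \sum_(2 ^ j <= i < 2 ^ j.+1) (i.+1%:R^-1 : R).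
  rewrite -sumr_const_nat; apply: ler_sum_nat => i /andP[_ i_lt].
  by rewrite lef_pV2 ?posrE ?ltr0n ?expn_gt0 // ler_nat.
have half : (2 ^ j.+1)%:R^-1 *+ (2 ^ j.+1 - 2 ^ j) = 2^-1 :> R.
  rewrite expnS mul2n -addnn addnK -mulr_natr natrD.
  by field; rewrite -natrD pnatr_eq0 -lt0n addn_gt0 expn_gt0.
rewrite half in block; rewrite -natr1 mulrDl mul1r; lra.
Qed.

Lemma sum_totient_mul_div_le n k : (0 < n)%N ->
    (forall m, (0 < m <= k)%N -> (m %| n)%N) ->
  (\sum_(0 <= m < k) totient (n * (n %/ m.+1)) <= n * n)%N.
Proof.
move=> n_gt0 dvd_n.
have divK a : (a %| n)%N -> (n %/ (n %/ a))%N = a.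
  by move=> a_dvd; rewrite divnA // mulKn.
rewrite -[X in (_ <= X)%N]sum_totient_dvd.
rewrite -(big_mkord (fun d => d %| n * n)%N totient) -[X in (_ <= X)%N]big_filter.
rewrite -(big_map (fun m => n * (n %/ m.+1))%N xpredT totient).
apply: (uniq_sub_le_big leqnn (fun a b => leq_addr b a)).
- rewrite map_inj_in_uniq ?iota_uniq // => a b.
  rewrite !mem_index_iota => /andP[_ a_lt] /andP[_ b_lt] /eqP.
  rewrite eqn_pmul2l // => /eqP same_div.
  by have := divK _ (dvd_n a.+1 a_lt); rewrite same_div divK ?dvd_n // => -[].
- by rewrite filter_uniq ?iota_uniq.
- move=> d /mapP[m]; rewrite mem_index_iota => /andP[_ m_lt] ->.
  have nd_dvd : (n * (n %/ m.+1) %| n * n)%N.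
    by rewrite dvdn_pmul2l // dvdn_div ?dvd_n.
  rewrite mem_filter nd_dvd mem_index_iota ltnS /=.
  by apply: dvdn_leq; rewrite ?muln_gt0 ?n_gt0.
Qed.

Lemma totient_harmonic_le (R : realFieldType) n k : (0 < n)%N ->
    (forall m, (0 < m <= k)%N -> (m %| n)%N) ->
  (totient n)%:R / n%:R * harmonic R k <= 1.
Proof.
move=> n_gt0 dvd_n; have := sum_totient_mul_div_le n_gt0 dvd_n.
rewrite -(ler_nat R) natr_sum.
have n_neq0 : n%:R != 0 :> R by rewrite pnatr_eq0 -lt0n.
rewrite (eq_big_nat _ _ (F2 := fun m => (totient n)%:R * n%:R * m.+1%:R^-1)); last first.
  move=> m /andP[_ m_lt]; have m_dvd := dvd_n m.+1 m_lt.
  rewrite totient_mul_dvdn ?dvdn_div // natrM natr_div ?mulrA //.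
  by rewrite unitfE pnatr_eq0.
rewrite -mulr_sumr -/(harmonic R k) natrM => le_sum.
rewrite -(ler_pM2l (_ : 0 < n%:R * n%:R)) ?mulr_gt0 ?ltr0n // mulr1.
suff -> : n%:R * n%:R * ((totient n)%:R / n%:R * harmonic R k) =
          (totient n)%:R * n%:R * harmonic R k by [].
by field.
Qed.

Definition primes_in a b := [seq p <- index_iota a b | prime p].

Lemma mem_primes_in p a b : (p \in primes_in a b) = prime p && (a <= p < b)%N.
Proof. by rewrite mem_filter mem_index_iota. Qed.

Lemma primes_in_prime a b : all prime (primes_in a b).
Proof. exact: filter_all. Qed.

Lemma primes_in_uniq a b : uniq (primes_in a b).
Proof. by rewrite filter_uniq ?iota_uniq. Qed.

Lemma primes_in_cat a b c : (a <= b)%N -> (b <= c)%N ->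
  primes_in a c = primes_in a b ++ primes_in b c.
Proof.
move=> le_ab le_bc; rewrite /primes_in /index_iota -filter_cat.
by rewrite -{2}(subnKC le_ab) -iotaD addnC addnBA // subnK // leq_trans.
Qed.

Lemma prime_dvdn_fact p k : prime p -> (p %| k`!)%N = (p <= k)%N.
Proof.
move=> p_pr; apply/idP/idP => [|le_pk]; last by rewrite dvdn_fact ?prime_gt0.
elim: k => [|k IHk]; first by rewrite dvdn1 => /eqP p1; rewrite p1 in p_pr.
by rewrite factS Euclid_dvdM // => /orP[/dvdn_leq->|/IHk/leqW].
Qed.

Lemma perm_primes_fact k : perm_eq (primes k`!) (primes_in 0 k.+1).
Proof.
apply: uniq_perm; rewrite ?primes_uniq ?primes_in_uniq // => p.
rewrite mem_primes mem_primes_in fact_gt0 /=.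
by case p_pr: (prime p); rewrite //= prime_dvdn_fact.
Qed.

Lemma euler_prod_primes_in_pow2 (R : realFieldType) j :
  euler_prod R (primes_in 0 (2 ^ j).+1) * j%:R <= 2.
Proof.
have := totient_harmonic_le R (fact_gt0 (2 ^ j)) (fun m => @dvdn_fact m _).
rewrite totient_euler_prod ?fact_gt0 // (perm_euler_prod R (perm_primes_fact _)).
have E_ge0 : 0 <= euler_prod R (primes_in 0 (2 ^ j).+1).
  by rewrite ltW ?euler_prod_gt0 ?primes_in_prime.
have := harmonic_pow2_ge R j; nra.
Qed.

Lemma euler_prod_primes_inS_ge (R : realFieldType) a b : (a <= b)%N ->
  euler_prod R (primes_in a b) - b%:R^-1 <= euler_prod R (primes_in a b.+1).
Proof.
move=> le_ab; rewrite (primes_in_cat le_ab (leqnSn b)) euler_prod_cat.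
have E_le1 : euler_prod R (primes_in a b) <= 1 by rewrite euler_prod_le1 ?primes_in_prime.
have binv_ge0 : 0 <= b%:R^-1 :> R by rewrite invr_ge0 ler0n.
have -> : euler_prod R (primes_in b b.+1) = if prime b then 1 - b%:R^-1 else 1.
  rewrite /euler_prod /primes_in /index_iota subSnn /=.
  by case: ifP; rewrite ?big_seq1 ?big_nil.
case: ifP => _; nra.
Qed.

Lemma exists_inv_nat_lt (R : archiNumFieldType) (eps : R) : 0 < eps ->
  exists N, forall n, (N <= n)%N -> n%:R^-1 < eps.
Proof.
move=> eps_gt0; exists (Num.bound eps^-1) => n le_Nn.
have n_gt : eps^-1 < n%:R.
  by apply: lt_le_trans (archi_boundP _) _; rewrite ?ler_nat // invr_ge0 ltW.
have n_gt0 : 0 < n%:R :> R by apply: le_lt_trans n_gt; rewrite invr_ge0 ltW.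
by rewrite invf_plt ?posrE.
Qed.

Lemma euler_prod_primes_in_small (R : archiRealFieldType) a (eps : R) : 0 < eps ->
  exists2 b, (a <= b)%N & euler_prod R (primes_in a b) < eps.
Proof.
move=> eps_gt0; set c := euler_prod R (primes_in 0 a).
have c_gt0 : 0 < c by rewrite euler_prod_gt0 ?primes_in_prime.
have [N N_inv] : exists N, forall n, (N <= n)%N -> n%:R^-1 < c * eps / 2.
  by apply: exists_inv_nat_lt; rewrite divr_gt0 ?mulr_gt0.
set j := (maxn a N).+1.
have le_aj : (a <= j)%N by rewrite leqW ?leq_maxl.
have le_j_pow : (j <= (2 ^ j).+1)%N := leqW (ltnW (ltn_expl j (ltnSn 1))).
exists (2 ^ j).+1; first exact: leq_trans le_j_pow.
have := euler_prod_primes_in_pow2 R j.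
rewrite (primes_in_cat (leq0n a) (leq_trans le_aj le_j_pow)) euler_prod_cat -/c.
have j_inv := N_inv j (leqW (leq_maxr a N)).
have j_gt0 : 0 < j%:R :> R by rewrite ltr0n.
rewrite -(ltr_pM2r j_gt0) mulVf ?gt_eqF // in j_inv.
move=> prod_le2; rewrite ltNge; apply/negP => eps_le.
have : c * eps * j%:R <= c * euler_prod R (primes_in a (2 ^ j).+1) * j%:R.
  by rewrite ler_pM2r // ler_pM2l.
lra.
Qed.

Lemma euler_prod_primes_in_approx (R : archiRealFieldType) (y eps : R) K :
    0 <= y <= 1 -> (0 < K)%N -> K%:R^-1 <= eps ->
  exists2 j, (K <= j)%N & `|euler_prod R (primes_in K j) - y| < eps.
Proof.
(* The least j with a product below y + eps works, because the prime j - 1 (if any)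
   lowers the product by at most 1/(j - 1) <= 1/K <= eps. *)
move=> /andP[y_ge0 y_le1] K_gt0 K_inv.
have eps_gt0 : 0 < eps by apply: lt_le_trans K_inv; rewrite invr_gt0 ltr0n.
pose below j := (K <= j)%N && (euler_prod R (primes_in K j) < y + eps).
have [b le_Kb small_b] := euler_prod_primes_in_small K eps_gt0.
have ex_below : exists j, below j by exists b; rewrite /below le_Kb; lra.
case: (ex_minnP ex_below) => j /andP[le_Kj below_j] min_j.
exists j => //; rewrite ltr_norml; apply/andP; split; last by lra.
case: (ltngtP K j) le_Kj => // [lt_Kj|<-] _; last first.
  by rewrite /euler_prod /primes_in /index_iota subnn big_nil; lra.
case: j lt_Kj below_j min_j => // j; rewrite ltnS => le_Kj below_j min_j.
have not_below : ~~ below j by apply/negP => /min_j; rewrite ltnn.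
rewrite /below le_Kj /= -leNgt in not_below.
have := euler_prod_primes_inS_ge R le_Kj.
have : j%:R^-1 <= K%:R^-1 :> R.
  by rewrite lef_pV2 ?posrE ?ltr0n ?ler_nat // (leq_trans K_gt0).
lra.
Qed.

Lemma twin_admissible M q : (0 < M)%N -> (6 %| M)%N -> prime q ->
  exists t, ~~ (q %| (M * t - 1) * (M * t + 1) * t)%N.
Proof.
move=> M_gt0 dvd6M q_pr.
have q_ndvd1 : ~~ (q %| 1)%N by rewrite dvdn1 neq_ltn prime_gt1 ?orbT.
have [q_dvdM | q_ndvdM] := boolP (q %| M)%N.
  exists 1%N; rewrite !muln1 !Euclid_dvdM //; apply/norP; split.
    by apply: contra q_ndvd1 => q_dvd; rewrite -(dvdn_addr 1 q_dvd) subnK.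
  by rewrite dvdn_addr.
(* Otherwise q > 3; for a * M = -1 (mod q) and t = 2 a the factors are -3, -1, 2 a. *)
have q_ndvd6 : ~~ (q %| 6)%N by apply: contra q_ndvdM => /dvdn_trans->.
have [a _] := Bezoutl M (prime_gt0 q_pr).
rewrite (eqP (_ : coprime q M)) ?prime_coprime // => q_dvd.
have a_gt0 : (0 < a)%N.
  by apply: contraTT q_dvd; rewrite lt0n negbK => /eqP->; rewrite mul0n addn0.
exists (2 * a)%N; set n := (M * (2 * a))%N.
have [n_sub1 n_add2] : (n - 1 + 3 = n + 2 /\ n + 2 = 2 * (1 + a * M))%N.
  by rewrite /n; clear -M_gt0 a_gt0; lia.
have q_dvd_n2 : (q %| n + 2)%N by rewrite n_add2 dvdn_mull.
rewrite !Euclid_dvdM //.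
apply/negP => /orP[/orP[q_dvd_sub1 | q_dvd_add1] | /orP[q_dvd2 | q_dvda]].
- move: q_ndvd6; rewrite -n_sub1 (dvdn_addr _ q_dvd_sub1) in q_dvd_n2.
  by rewrite (dvdn_trans q_dvd_n2 (dvdn_mull 2 (dvdnn 3))).
- move: q_ndvd1; rewrite -[2%N]/(1 + 1)%N addnA (dvdn_addr _ q_dvd_add1) in q_dvd_n2.
  by rewrite q_dvd_n2.
- by move: q_ndvd6; rewrite (dvdn_trans q_dvd2 (dvdn_mulr 3 (dvdnn 2))).
- by move: q_ndvd1; rewrite (dvdn_addl _ (dvdn_mulr M q_dvda)) in q_dvd; rewrite q_dvd.
Qed.

Lemma int_prime_nat n : int_prime n%:Z = prime n.
Proof. by rewrite /int_prime ltz_nat; case: n. Qed.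

Lemma dickson_twin_primes M N : dickson_conjecture -> (0 < M)%N -> (6 %| M)%N ->
  exists t, [/\ (N < t)%N, prime t, prime (M * t - 1) & prime (M * t + 1)].
Proof.
move=> dickson M_gt0 dvd6M.
have M_pos : 0 < M%:Z by rewrite ltz_nat.
pose s : seq (int * int) := [:: (M%:Z, -1); (M%:Z, 1); (1, 0)].
have eval_s t : (0 < t)%N ->
    [seq lin_eval ab t%:Z | ab <- s] = [seq n%:Z | n <- [:: M * t - 1; M * t + 1; t]%N].
  move=> t_gt0; rewrite /= /lin_eval /= mul1r addr0 -subzn ?muln_gt0 ?M_gt0 //.
have [||t [lt_Nt]] := dickson s _ _ N; first by rewrite /= M_pos.
  move=> q q_pr; have [t q_ndvd] := twin_admissible M_gt0 dvd6M q_pr.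
  have t_gt0 : (0 < t)%N by case: t q_ndvd => //; rewrite muln0 dvdn0.
  exists t%:Z; rewrite -(big_map (lin_eval^~ t%:Z) xpredT id) eval_s // big_map.
  by rewrite !big_cons big_nil dvdzE /= !muln1 mulnA.
have t_gt0 : (0 < t)%N by apply: leq_ltn_trans lt_Nt.
rewrite -(all_map (lin_eval^~ t%:Z)) eval_s // all_map /=.
by rewrite !int_prime_nat andbT => /and3P[p_minus p_plus t_pr]; exists t.
Qed.

Lemma twin_ratio_bound (R : realFieldType) (e m u : R) :
    0 <= e <= 1 -> 2 <= m -> 1 < u ->
  `|e * m * (u - 1) / (m * u - 2) - e| <= u^-1.
Proof.
move=> /andP[e_ge0 e_le1] m_ge2 u_gt1.
have D_gt0 : 0 < m * u - 2 by nra.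
have -> : e * m * (u - 1) / (m * u - 2) - e = - (e * ((m - 2) / (m * u - 2))).
  by field; rewrite gt_eqF.
have frac_ge0 : 0 <= (m - 2) / (m * u - 2).
  by apply: divr_ge0; [rewrite subr_ge0 | exact: ltW].
rewrite normrN ger0_norm; last exact: mulr_ge0.
apply: le_trans (ler_piMl frac_ge0 e_le1) _.
have u_gt0 : 0 < u by lra.
rewrite ler_pdivrMr // mulrBr mulrCA mulVf ?gt_eqF // mulr1 lerD2l lerN2.
have : u^-1 <= 1 by rewrite invf_le1 // ltW.
lra.
Qed.

Lemma totient_ratio_twin (R : realType) M t :
    (2 <= M)%N -> prime t -> coprime M t -> prime (M * t - 1) ->
  `|totient_ratio R (M * t - 1) - euler_prod R (primes M)| <= t%:R^-1.
Proof.
move=> M_ge2 t_pr co_Mt p_pr.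
have M_gt0 : (0 < M)%N by apply: leq_trans M_ge2.
have Mt_ge2 : (2 <= M * t)%N by rewrite -[2%N]muln1 leq_mul ?prime_gt0.
have E_bounds : 0 <= euler_prod R (primes M) <= 1.
  have primes_M : all prime (primes M) by apply/allP => p; rewrite mem_primes => /andP[].
  by rewrite euler_prod_le1 ?ltW ?euler_prod_gt0.
have tot_M : (totient M)%:R = euler_prod R (primes M) * M%:R.
  by rewrite -totient_euler_prod ?divfK ?pnatr_eq0 -?lt0n.
rewrite /totient_ratio (totient_prime p_pr) subn1 prednK ?(leq_trans _ Mt_ge2) //.
rewrite totient_coprime // (totient_prime t_pr) natrM tot_M -!subn1 -subnDA.
rewrite !natrB ?prime_gt0 // natrM; apply: twin_ratio_bound => //.
  by rewrite (ler_nat R 2).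
by rewrite ltr1n prime_gt1.
Qed.

Lemma exists_twin_modulus (R : archiRealFieldType) (y eps : R) :
    0 <= y <= 3^-1 -> 0 < eps ->
  exists M, [/\ (0 < M)%N, (6 %| M)%N & `|euler_prod R (primes M) - y| < eps].
Proof.
move=> /andP[y_ge0 y_le] eps_gt0.
have [N N_inv] := exists_inv_nat_lt eps_gt0.
have [j _ approx] : exists2 j, (maxn 5 N <= j)%N &
    `|euler_prod R (primes_in (maxn 5 N) j) - 3 * y| < eps.
  apply: euler_prod_primes_in_approx; last by rewrite ltW ?N_inv ?leq_maxr.
  - by apply/andP; split; lra.
  - by rewrite (leq_trans _ (leq_maxl 5 N)).
pose s := [:: 2%N, 3%N & primes_in (maxn 5 N) j].
have s_prime : all prime s by rewrite /= primes_in_prime.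
have s_uniq : uniq s.
  by rewrite /= in_cons !mem_primes_in !geq_max primes_in_uniq.
exists (\prod_(p <- s) p)%N; split.
- by rewrite big_seq prodn_cond_gt0 // => p /(allP s_prime)/prime_gt0.
- by rewrite !big_cons mulnA dvdn_mulr.
rewrite (perm_euler_prod R (perm_primes_prod s_uniq s_prime)) /euler_prod !big_cons.
rewrite -/(euler_prod R _); move: approx; rewrite !ltr_norml => /andP[lo hi].
apply/andP; split; lra.
Qed.

Theorem theorem3 (R : realType) :
  dickson_conjecture ->
  forall x : R, 0 <= x <= 3^-1 ->
  forall eps : R, 0 < eps ->
  exists p : nat, [/\ prime p, prime p.+2 & `|totient_ratio R p - x| < eps].
Proof.
move=> dickson x x_bounds eps eps_gt0.
have eps2_gt0 : 0 < eps / 2 by rewrite divr_gt0.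
have [M [M_gt0 dvd6M M_near]] := exists_twin_modulus x_bounds eps2_gt0.
have [N N_inv] := exists_inv_nat_lt eps2_gt0.
have [t [lt_t t_prime p_prime p2_prime]] :=
  dickson_twin_primes (maxn M N) dickson M_gt0 dvd6M.
have co_Mt : coprime M t.
  rewrite coprime_sym prime_coprime //; apply/negP => /(dvdn_leq M_gt0).
  by rewrite leqNgt (leq_ltn_trans (leq_maxl M N) lt_t).
exists (M * t - 1)%N; split => //.
  by rewrite subn1 prednK ?muln_gt0 ?M_gt0 ?prime_gt0 // -addn1.
have M_ge2 : (2 <= M)%N by apply: leq_trans (dvdn_leq M_gt0 dvd6M).
have ratio_near := totient_ratio_twin R M_ge2 t_prime co_Mt p_prime.
have t_inv := N_inv t (ltnW (leq_ltn_trans (leq_maxr M N) lt_t)).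
rewrite -(subrK (euler_prod R (primes M)) (totient_ratio R _)) -addrA.
by apply: le_lt_trans (ler_normD _ _) _; lra.
Qed.
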